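(* Let $A=(a,\ ha+d,\ ha+3d,\ ha+5d,\ \dots,\ ha+(2k+1)d)$ where $\gcd(a,d)=1$, $a,h,d,k\in\mathbb{P}$, $a>2$, $d>h$, $1\le 2k+1\le a-1$. Write $a-1=(2k+1)s+t$ with $1\le t\le 2k+1$. Then \begin{align*} \sum_{r=0}^{a-1}x^{N_r}&=1+\frac{x^{ha+d}\big(1-x^{(ha+(2k+1)d)s}\big)\big(1-x^{2d(k+1)}\big)}{(1-x^{ha+(2k+1)d})(1-x^{2d})}+\frac{x^{2ha+2d}\big(1-x^{(ha+(2k+1)d)s}\big)\big(1-x^{2dk}\big)}{(1-x^{ha+(2k+1)d})(1-x^{2d})}+f_1(x), \end{align*} where $$f_1(x)=\begin{cases}\dfrac{x^{ha(s+1)+d((2k+1)s+1)}\big(1-x^{d(t+1)}\big)}{1-x^{2d}}+\dfrac{x^{ha(s+2)+d((2k+1)s+2)}\big(1-x^{d(t-1)}\big)}{1-x^{2d}} & \text{if } t \text{ is odd},\\[8pt] \dfrac{x^{ha(s+1)+d((2k+1)s+1)}\big(1-x^{dt}\big)}{1-x^{2d}}+\dfrac{x^{ha(s+2)+d((2k+1)s+2)}\big(1-x^{dt}\big)}{1-x^{2d}} & \text{if } t \text{ is even}.\end{cases}$$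
   Context: For $A=(a,c_1,\dots,c_m)$ of positive integers with $\gcd(A)=1$ and $0\le r\le a-1$, $N_r$ is the least nonnegative integer $a_0\equiv r\pmod a$ that can be written as $\sum_{i=1}^m c_ix_i$ with all $x_i$ nonnegative integers. $\mathbb{P}=\{1,2,\dots\}$. *)

From HB Require Import structures.
From mathcomp Require Import all_boot all_order all_algebra fraction.
From Stdlib Require Import ClassicalEpsilon.
Set Implicit Arguments. Unset Strict Implicit. Unset Printing Implicit Defensive.

Definition representable (cs : seq nat) (n : nat) : Prop :=
  exists x : 'I_(size cs) -> nat, n = \sum_(i < size cs) nth 0 cs i * x i.

Definition decP (P : Prop) : bool :=
  if excluded_middle_informative P then true else false.

Definition Ncand (a : nat) (cs : seq nat) (r : nat) : pred nat :=
  fun n => decP (n = r %[mod a] /\ representable cs n).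

(* N_r = least such a0 (defaults to 0 if none exists; cannot happen when gcd = 1) *)
Definition Nr (a : nat) (cs : seq nat) (r : nat) : nat :=
  match excluded_middle_informative (exists n, Ncand a cs r n) with
  | left H => ex_minn H
  | right _ => 0
  end.

Definition gens (a h d k : nat) : seq nat :=
  [seq h * a + (2 * j + 1) * d | j <- iota 0 k.+1].

From Pilot Require Import Defs.
From HB Require Import structures.
From mathcomp Require Import all_boot all_order all_algebra fraction.
From mathcomp Require Import zify ring.
From Stdlib Require Import ClassicalEpsilon.

Set Implicit Arguments.
Unset Strict Implicit.
Unset Printing Implicit Defensive.

Import GRing.Theory.

(* Every element of the semigroup is p (h a) + q d, where p counts the
   generators used and q sums their odd coefficients 2j+1, so that
   p <= q <= (2k+1) p and q = p (mod 2).  As m d (m < a) runs over all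
   residues mod a, N_{m d mod a} = P(m) h a + m d with P(m) the least such p
   for q = m: any other admissible q is at least m + a, which forces more
   generators.  For m = i(2k+1) + j + 1 with j <= 2k one gets
   P(m) = i + 1 + (j mod 2), so the generating sum splits into s full blocks,
   the i-th being x^(iL) times a fixed block polynomial, and one partial block
   of length t; a block polynomial is two geometric series in x^(2d),
   for even and for odd j. *)

Lemma eqn_modMr_coprime a d m n : coprime a d ->
  (m * d == n * d %[mod a]) = (m == n %[mod a]).
Proof.
move=> co; wlog le_nm : m n / n <= m.
  move=> W; case: (leqP n m) => [|/ltnW] le; first exact: W.
  by rewrite eq_sym [RHS]eq_sym; apply: W.
by rewrite !eqn_mod_dvd ?leq_mul2r ?le_nm ?orbT // -mulnBl Gauss_dvdl.
Qed.

Lemma decPP (P : Prop) : reflect P (Defs.decP P).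
Proof.
by rewrite /Defs.decP; case: (excluded_middle_informative P) => p; constructor.
Qed.

Lemma Nr_least a cs r n0 : n0 = r %[mod a] -> representable cs n0 ->
  (forall n, n = r %[mod a] -> representable cs n -> n0 <= n) -> Nr a cs r = n0.
Proof.
move=> n0_mod n0_rep n0_min.
have candP n : reflect (n = r %[mod a] /\ representable cs n) (Ncand a cs r n).
  exact: decPP.
rewrite /Nr; case: excluded_middle_informative => [ex | nex]; last first.
  by case: nex; exists n0; apply/candP.
case: ex_minnP => m /candP[m_mod m_rep] m_min.
by apply/eqP; rewrite eqn_leq n0_min // m_min //; apply/candP.
Qed.

Lemma representable0 cs : representable cs 0.
Proof. by exists (fun=> 0); rewrite big1 // => i _; rewrite muln0. Qed.

Lemma representableD cs m n :
  representable cs m -> representable cs n -> representable cs (m + n).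
Proof.
move=> [x ->] [y ->]; exists (fun i => x i + y i).
by rewrite -big_split; apply: eq_bigr => i _; rewrite mulnDr.
Qed.

Lemma representable_nth cs j : j < size cs -> representable cs (nth 0 cs j).
Proof.
move=> lt_j; exists (fun i => nat_of_bool (val i == j)).
rewrite (bigD1 (Ordinal lt_j)) //= eqxx muln1 big1 ?addn0 // => i.
by rewrite -val_eqE /= => /negbTE ->; rewrite muln0.
Qed.

Section MinTerms.
Variable k : nat.
Local Notation K := (2 * k + 1).

(* the least p with p <= m <= K p and p = m (mod 2) *)
Definition min_terms m :=
  if m is m'.+1 then m' %/ K + 1 + odd (m' %% K) else 0.

Lemma min_termsE i j : j < K -> min_terms (i * K + j).+1 = i + 1 + odd j.
Proof.
move=> lt_jK; rewrite /= divnMDl ?modnMDl ?divn_small ?modn_small //; lia.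
Qed.

Lemma block_decomp m : exists i j, m = i * K + j /\ j < K.
Proof. by exists (m %/ K), (m %% K); rewrite -divn_eq ltn_pmod ?addn1. Qed.

Lemma min_terms_spec m :
  min_terms m <= m <= K * min_terms m /\ odd (min_terms m) = odd m.
Proof.
case: m => [|m] //; have [i [j [-> lt_jK]]] := block_decomp m.
by rewrite min_termsE //; lia.
Qed.

Lemma min_terms_min m p : m <= K * p -> odd p = odd m -> min_terms m <= p.
Proof.
case: m => [|m] // le_mp odd_pm; have [i [j [Em lt_jK]]] := block_decomp m.
rewrite {}Em in le_mp odd_pm *; rewrite min_termsE //.
have lt_ip : i < p by rewrite -(@ltn_pmul2l K) ?addn1 //; lia.
lia.
Qed.

Lemma min_terms_bound m p : m + K < K * p -> min_terms m <= p.
Proof.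
case: m => [|m] // lt_mp; have [i [j [Em lt_jK]]] := block_decomp m.
rewrite {}Em in lt_mp *; rewrite min_termsE //.
have : i.+1 < p by rewrite -(@ltn_pmul2l K) ?addn1 //; lia.
lia.
Qed.

End MinTerms.

Section ArithmeticGenerators.
Variables a h d k : nat.
Local Notation K := (2 * k + 1).
Local Notation cs := (gens a h d k).

Lemma size_gens : size cs = k.+1.
Proof. by rewrite size_map size_iota. Qed.

Lemma nth_gens j : j < k.+1 -> nth 0 cs j = h * a + (2 * j + 1) * d.
Proof. by move=> lt_jk; rewrite (nth_map 0) ?size_iota // nth_iota. Qed.

Lemma representable_gens p q : p <= q <= K * p -> odd p = odd q ->
  representable cs (p * (h * a) + q * d).
Proof.
elim: p q => [|p IHp] q.
  by rewrite muln0 leqn0 => /andP[_ /eqP->] _; apply: representable0.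
move=> le_pqp odd_pq.
(* peel off the generator whose odd coefficient is min(K, q - p) *)
have [j [q' [lt_jk Eq le_pq'p]]] :
    exists j q', [/\ j < k.+1, q = q' + (2 * j + 1) & p <= q' <= K * p].
  by exists (minn K (q - p))./2, (q - minn K (q - p)); split; lia.
have -> : p.+1 * (h * a) + q * d = nth 0 cs j + (p * (h * a) + q' * d).
  by rewrite Eq nth_gens //; lia.
apply: representableD; first by apply: representable_nth; rewrite size_gens.
by apply: IHp; lia.
Qed.

Lemma representable_gensP n : representable cs n <->
  exists p q, [/\ n = p * (h * a) + q * d, p <= q <= K * p & odd p = odd q].
Proof.
split=> [[x ->] | [p [q [-> ? ?]]]]; last exact: representable_gens.
have lt_ik (i : 'I_(size cs)) : i < k.+1 by rewrite -size_gens.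
pose p := \sum_(i < size cs) x i; pose r := \sum_(i < size cs) i * x i.
have -> : \sum_(i < size cs) nth 0 cs i * x i = p * (h * a) + (p + 2 * r) * d.
  rewrite (eq_bigr (fun i => (h * a + d) * x i + 2 * d * (i * x i))) => [|i _].
    by rewrite /p /r big_split /= -!big_distrr /=; lia.
  by rewrite nth_gens //; lia.
have le_rkp : r <= k * p.
  by rewrite big_distrr leq_sum // => i _; rewrite leq_mul2r -ltnS lt_ik orbT.
by exists p, (p + 2 * r); split; lia.
Qed.

Lemma Nr_gens m : coprime a d -> K < a -> m < a ->
  Nr a cs (m * d %% a) = min_terms k m * (h * a) + m * d.
Proof.
move=> co_ad lt_Ka lt_ma; have [min_le odd_min] := min_terms_spec k m.
apply: Nr_least; first by rewrite modn_mod mulnA modnMDl.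
  by apply: representable_gens.
move=> n n_mod /representable_gensP[p [q [En le_pqp odd_pq]]]; subst n.
rewrite modn_mod mulnA modnMDl in n_mod.
have q_mod : q %% a = m.
  by rewrite -(modn_small lt_ma); apply/eqP; rewrite -(eqn_modMr_coprime _ _ co_ad) n_mod.
have q_cases : q = m \/ m + K < q.
  rewrite (divn_eq q a) q_mod; case: (posnP (q %/ a)) => [-> | q_pos]; first by left.
  by right; have := leq_pmull a q_pos; lia.
have le_min_p : min_terms k m <= p.
  case/andP: le_pqp => _ le_qKp; case: q_cases => [q_eq | lt_mq].
    by apply: min_terms_min; rewrite -q_eq.
  by apply: min_terms_bound; apply: leq_trans le_qKp.
have le_mq : m <= q by case: q_cases => [-> // | ]; lia.
by rewrite leq_add ?leq_mul.
Qed.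

End ArithmeticGenerators.

Local Open Scope ring_scope.

Lemma sum_Nr_gens (V : nmodType) (F : nat -> V) a h d k :
  coprime a d -> (2 * k + 1 < a)%N ->
  \sum_(r < a) F (Nr a (gens a h d k) r)
  = \sum_(m < a) F (min_terms k m * (h * a) + m * d)%N.
Proof.
move=> co_ad lt_Ka; have a_gt0 : (0 < a)%N by apply: leq_ltn_trans lt_Ka.
pose mul_d (m : 'I_a) := Ordinal (ltn_pmod (m * d) a_gt0).
have mul_d_inj : injective mul_d.
  move=> m1 m2 /(congr1 val) /eqP /=; rewrite eqn_modMr_coprime //.
  by rewrite !modn_small // => /eqP /val_inj.
by rewrite (reindex_inj mul_d_inj); apply: eq_bigr => m _; rewrite Nr_gens.
Qed.

Lemma sum_blocks (V : nmodType) (F : nat -> V) s n t :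
  \sum_(m < s * n + t) F m
  = \sum_(i < s) \sum_(j < n) F (i * n + j)%N + \sum_(j < t) F (s * n + j)%N.
Proof.
elim: s t => [|s IHs] t.
  by rewrite mul0n add0n big_ord0 add0r.
rewrite mulSnr -addnA IHs big_split_ord big_ord_recr /= -!addrA; congr (_ + _).
by congr (_ + _); apply: eq_bigr => j _; rewrite addnA.
Qed.

Lemma sum_parity_split (V : nmodType) (F : nat -> V) n :
  \sum_(j < n) F j = \sum_(u < uphalf n) F u.*2 + \sum_(u < n./2) F u.*2.+1.
Proof.
elim: n F => [|n IHn] F; first by rewrite !big_ord0 addr0.
rewrite big_ord_recl (IHn (fun j => F j.+1)) big_ord_recl /= -addrA.
by congr (_ + _); rewrite addrC.
Qed.

Section GeneratingPolynomial.
Variables (R : comPzSemiRingType) (x : R) (b d k : nat).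
Local Notation K := (2 * k + 1)%N.
Local Notation L := (b + K * d)%N.

(* the terms m = i K + j + 1, j < n, of a block, divided by x ^+ (i * L) *)
Definition block n := \sum_(j < n) x ^+ ((1 + odd j) * b + j.+1 * d).

Lemma block_parity n :
  block n = x ^+ (b + d) * \sum_(u < uphalf n) x ^+ (2 * d) ^+ u
            + x ^+ (2 * b + 2 * d) * \sum_(u < n./2) x ^+ (2 * d) ^+ u.
Proof.
rewrite /block (sum_parity_split (fun j => x ^+ ((1 + odd j) * b + j.+1 * d))).
rewrite !big_distrr /=.
by congr (_ + _); apply: eq_bigr => u _; rewrite -exprM -exprD; congr (x ^+ _); lia.
Qed.

Lemma sum_min_terms n s t : n = (s * K + t).+1 -> (t <= K)%N ->
  \sum_(m < n) x ^+ (min_terms k m * b + m * d)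
  = 1 + (\sum_(i < s) x ^+ L ^+ i) * block K + x ^+ L ^+ s * block t.
Proof.
move=> -> le_tK; rewrite big_ord_recl.
rewrite (sum_blocks (fun m => x ^+ (min_terms k m.+1 * b + m.+1 * d))).
rewrite [x ^+ _ in LHS](_ : _ = 1); last by rewrite /= !mul0n expr0.
rewrite big_distrl -addrA; congr (_ + (_ + _)).
  apply: eq_bigr => i _; rewrite /block big_distrr; apply: eq_bigr => j _.
  by rewrite min_termsE //= -exprM -exprD; congr (x ^+ _); lia.
rewrite /block big_distrr; apply: eq_bigr => j _.
rewrite min_termsE /=; last exact: leq_trans (ltn_ord j) le_tK.
by rewrite -exprM -exprD; congr (x ^+ _); lia.
Qed.

End GeneratingPolynomial.

Lemma geom_sum_frac (F : fieldType) (y : F) n : y != 1 ->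
  \sum_(i < n) y ^+ i = (1 - y ^+ n) / (1 - y).
Proof.
move=> y_neq1; have y1_neq0 : 1 - y != 0 by rewrite subr_eq0 eq_sym.
by rewrite -[1 - y ^+ n]opprB subrX1 -mulNr opprB mulrAC divff // mul1r.
Qed.

Section ClosedForm.
Variables (F : fieldType) (x : F) (b d k : nat).
Local Notation K := (2 * k + 1)%N.
Local Notation L := (b + K * d)%N.
Hypotheses (xL_neq1 : x ^+ L != 1) (x2d_neq1 : x ^+ (2 * d) != 1).

Lemma sum_min_terms_closed_form n s t : n = (s * K + t).+1 -> (t <= K)%N ->
  \sum_(m < n) x ^+ (min_terms k m * b + m * d)
  = 1
    + x ^+ (b + d) * (1 - x ^+ (L * s)) * (1 - x ^+ (2 * d * k.+1))
      / ((1 - x ^+ L) * (1 - x ^+ (2 * d)))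
    + x ^+ (2 * b + 2 * d) * (1 - x ^+ (L * s)) * (1 - x ^+ (2 * d * k))
      / ((1 - x ^+ L) * (1 - x ^+ (2 * d)))
    + if odd t then
        x ^+ (b * s.+1 + d * (K * s + 1)) * (1 - x ^+ (d * t.+1)) / (1 - x ^+ (2 * d))
        + x ^+ (b * s.+2 + d * (K * s + 2)) * (1 - x ^+ (d * t.-1)) / (1 - x ^+ (2 * d))
      else
        x ^+ (b * s.+1 + d * (K * s + 1)) * (1 - x ^+ (d * t)) / (1 - x ^+ (2 * d))
        + x ^+ (b * s.+2 + d * (K * s + 2)) * (1 - x ^+ (d * t)) / (1 - x ^+ (2 * d)).
Proof.
move=> n_eq le_tK; rewrite (sum_min_terms _ _ _ n_eq le_tK) !block_parity.
have -> : uphalf K = k.+1 by lia.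
have -> : K./2 = k by lia.
rewrite !(geom_sum_frac _ xL_neq1) !(geom_sum_frac _ x2d_neq1).
rewrite (_ : b * s.+1 + _ = L * s + (b + d))%N; last by lia.
rewrite (_ : b * s.+2 + _ = L * s + (2 * b + 2 * d))%N; last by lia.
case: ifP => odd_t.
  rewrite (_ : d * t.+1 = 2 * d * uphalf t)%N; last first.
    by rewrite [RHS]mulnAC [LHS]mulnC; congr (_ * _)%N; lia.
  rewrite (_ : d * t.-1 = 2 * d * t./2)%N; last first.
    by rewrite [RHS]mulnAC [LHS]mulnC; congr (_ * _)%N; lia.
  rewrite ![x ^+ (L * s + _)]exprD ![x ^+ (2 * d * _)]exprM [x ^+ (L * s)]exprM.
  by field; rewrite !subr_eq0 ![1 == _]eq_sym xL_neq1 x2d_neq1.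
rewrite (_ : uphalf t = t./2); last by lia.
rewrite (_ : d * t = 2 * d * t./2)%N; last first.
  by rewrite [RHS]mulnAC [LHS]mulnC; congr (_ * _)%N; lia.
rewrite ![x ^+ (L * s + _)]exprD ![x ^+ (2 * d * _)]exprM [x ^+ (L * s)]exprM.
by field; rewrite !subr_eq0 ![1 == _]eq_sym xL_neq1 x2d_neq1.
Qed.

End ClosedForm.

Lemma tofracX_exp_neq1 (R : idomainType) n : (0 < n)%N ->
  (@FracField.tofrac {poly R} 'X) ^+ n != 1.
Proof.
move=> n_gt0; rewrite -tofracXn -tofrac1 tofrac_eq; apply/eqP => eq_Xn1.
by move: (size_polyXn R n); rewrite eq_Xn1 size_poly1; lia.
Qed.

Theorem mainTheorem15 (a h d k s t : nat) :
  coprime a d -> (0 < h)%N -> (0 < d)%N -> (0 < k)%N ->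
  (2 < a)%N -> (h < d)%N -> (1 <= 2 * k + 1 <= a - 1)%N ->
  (a - 1 = (2 * k + 1) * s + t)%N -> (1 <= t <= 2 * k + 1)%N ->
  let x : {fraction {poly rat}} := @FracField.tofrac {poly rat} 'X in
  let L := (h * a + (2 * k + 1) * d)%N in
  let f1 :=
    if odd t then
      x ^+ (h * a * s.+1 + d * ((2 * k + 1) * s + 1)) * (1 - x ^+ (d * t.+1))
        / (1 - x ^+ (2 * d))
      + x ^+ (h * a * s.+2 + d * ((2 * k + 1) * s + 2)) * (1 - x ^+ (d * t.-1))
        / (1 - x ^+ (2 * d))
    else
      x ^+ (h * a * s.+1 + d * ((2 * k + 1) * s + 1)) * (1 - x ^+ (d * t))
        / (1 - x ^+ (2 * d))
      + x ^+ (h * a * s.+2 + d * ((2 * k + 1) * s + 2)) * (1 - x ^+ (d * t))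
        / (1 - x ^+ (2 * d)) in
  \sum_(r < a) x ^+ (Nr a (gens a h d k) r)
  = 1
    + x ^+ (h * a + d) * (1 - x ^+ (L * s)) * (1 - x ^+ (2 * d * k.+1))
      / ((1 - x ^+ L) * (1 - x ^+ (2 * d)))
    + x ^+ (2 * h * a + 2 * d) * (1 - x ^+ (L * s)) * (1 - x ^+ (2 * d * k))
      / ((1 - x ^+ L) * (1 - x ^+ (2 * d)))
    + f1.
Proof.
move=> co_ad _ d_gt0 _ a_gt2 _ /andP[_ le_Ka] Ea /andP[_ le_tK] x L f1.
have lt_Ka : (2 * k + 1 < a)%N by lia.
have a_eq : a = (s * (2 * k + 1) + t).+1 by lia.
rewrite (sum_Nr_gens (fun n => x ^+ n) _ co_ad lt_Ka) /f1 -[(2 * h * a)%N]mulnA.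
apply: (sum_min_terms_closed_form _ _ a_eq le_tK).
  by apply: tofracX_exp_neq1; rewrite /L; lia.
by apply: tofracX_exp_neq1; lia.
Qed.
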